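(* Let $k$ be a positive integer, $a=6k+1$, $b=9k+2$, $c=9k+3$, $S=\{a,b,c\}$ and $G=\langle S\rangle$. For $i\in\mathbb{N}^*$ define $A_{i,k}=\{3ia\}$, $B_{i,k}=[3ia+1,\,3ia+3i]$, $C_{i,k}=[3ia+3k+1,\,3ia+3k+2+3(i-1)]$, $D_{i,k}=A_{i,k}+\{a\}$, $E_{i,k}=B_{i,k}+\{a\}$, $F_{i,k}=[3ia+b,\,3ia+c+3i]$, $G_{i,k}=D_{i,k}+\{a\}$, $I_{i,k}=E_{i,k}+\{a\}$, $J_{i,k}=F_{i,k}+\{a\}$, let $T_{i,k}=A_{i,k}\cup B_{i,k}\cup C_{i,k}\cup D_{i,k}\cup E_{i,k}\cup F_{i,k}\cup G_{i,k}\cup I_{i,k}\cup J_{i,k}$, and let $H_{3,k}=\{0\}\cup(S+\{0,a\})\cup\bigcup_{i\in\mathbb{N}^*}T_{i,k}$. Then: (1) $H_{3,k}$ is a submonoid of $(\mathbb{N},+,0)$ containing $S$; (2) for every $i\in[1,k-1]$: $A_{i,k}<B_{i,k}<C_{i,k}<D_{i,k}<E_{i,k}<F_{i,k}<G_{i,k}<I_{i,k}<J_{i,k}$ and $J_{i,k}<A_{i+1,k}$; moreover $A_{k,k}<B_{k,k}<C_{k,k}<D_{k,k}$; (3) $[(3k+1)a,\infty[\ \subseteq H_{3,k}$; (4) $G=H_{3,k}$; (5) $H_{3,k}$ is a $3$-permutation numerical semigroup.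
   Context: $\mathbb{N}=\{0,1,2,\dots\}$, $\mathbb{N}^*=\mathbb{N}\setminus\{0\}$. A numerical semigroup is a submonoid $G$ of $(\mathbb{N},+,0)$ with $\mathbb{N}\setminus G$ finite; $\langle S\rangle$ is the submonoid generated by $S$. Writing the elements of a numerical semigroup as $0=g_0<g_1<g_2<\cdots$, it is an $n$-permutation numerical semigroup if it is generated by $\{g_1,\dots,g_n\}$ and for every $k\in\mathbb{N}$ the tuple $(g_{kn+1}\bmod n,\dots,g_{kn+n}\bmod n)$ contains exactly one representative of each residue class mod $n$. Notation: $[a,b]=\{x\in\mathbb{N}:a\le x\le b\}$, $[a,\infty[=\{x\in\mathbb{N}:x\ge a\}$; for $X,Y\subseteq\mathbb{N}$, $X+Y=\{x+y:x\in X,y\in Y\}$. For nonempty $X,Y$, $X<Y$ means $x<y$ for all $x\in X,y\in Y$. (The set $G_{i,k}$ is unrelated to $G=\langle S\rangle$.) *)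

From Stdlib Require Import Arith Lia.

Definition nset := nat -> Prop.

Definition interval (lo hi : nat) : nset := fun x => lo <= x /\ x <= hi.
Definition sumset (X Y : nset) : nset :=
  fun z => exists x y, X x /\ Y y /\ z = x + y.
Definition sing (a : nat) : nset := fun x => x = a.
(* X < Y for nonempty X, Y: x < y for all x in X, y in Y
   (nonemptiness is part of the notion, as the notation is only defined
   for nonempty sets) *)
Definition set_lt (X Y : nset) : Prop :=
  (exists x, X x) /\ (exists y, Y y) /\ forall x y, X x -> Y y -> x < y.

Definition submonoid (H : nset) : Prop :=
  H 0 /\ forall x y, H x -> H y -> H (x + y).

Inductive gen (S : nset) : nset :=
| gen0 : gen S 0
| genS : forall s, S s -> gen S s
| genD : forall x y, gen S x -> gen S y -> gen S (x + y).

Definition numerical_semigroup (G : nset) : Prop :=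
  submonoid G /\ exists N, forall x, ~ G x -> x < N.

Definition enumerates (G : nset) (g : nat -> nat) : Prop :=
  (forall i j, i < j -> g i < g j) /\ (forall x, G x <-> exists i, g i = x).

Definition perm_numerical_semigroup (n : nat) (G : nset) : Prop :=
  numerical_semigroup G /\
  exists g, enumerates G g /\
    (forall x, G x <-> gen (fun s => exists j, 1 <= j <= n /\ s = g j) x) /\
    (forall k r, r < n ->
       exists j, (1 <= j <= n /\ g (k * n + j) mod n = r) /\
         forall j', 1 <= j' <= n -> g (k * n + j') mod n = r -> j' = j).

Section Sets.
Variable k : nat.
Definition a_ := 6 * k + 1.
Definition b_ := 9 * k + 2.
Definition c_ := 9 * k + 3.
Definition S_ : nset := fun x => x = a_ \/ x = b_ \/ x = c_.

Definition A_ (i : nat) : nset := sing (3 * i * a_).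
Definition B_ (i : nat) : nset := interval (3 * i * a_ + 1) (3 * i * a_ + 3 * i).
Definition C_ (i : nat) : nset :=
  interval (3 * i * a_ + 3 * k + 1) (3 * i * a_ + 3 * k + 2 + 3 * (i - 1)).
Definition D_ (i : nat) : nset := sumset (A_ i) (sing a_).
Definition E_ (i : nat) : nset := sumset (B_ i) (sing a_).
Definition F_ (i : nat) : nset := interval (3 * i * a_ + b_) (3 * i * a_ + c_ + 3 * i).
Definition G_ (i : nat) : nset := sumset (D_ i) (sing a_).
Definition I_ (i : nat) : nset := sumset (E_ i) (sing a_).
Definition J_ (i : nat) : nset := sumset (F_ i) (sing a_).
Definition T_ (i : nat) : nset := fun x =>
  A_ i x \/ B_ i x \/ C_ i x \/ D_ i x \/ E_ i x \/ F_ i x \/ G_ i x \/ I_ i x \/ J_ i x.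
Definition H3 : nset := fun x =>
  x = 0 \/ sumset S_ (fun t => t = 0 \/ t = a_) x \/ exists i, 1 <= i /\ T_ i x.
End Sets.

(* Write x = j a + r.  Then H_{3,k} is the set of all j a + r with r <= 3 floor(j/3)
   (blocks A, B, D, E, G, I) or 3k + 1 <= r <= 3k + 3 ceil(j/3) - 1 (blocks C, F, J).
   Since b = a + 3k + 1 and c = a + 3k + 2, adding a generator to such an element gives
   one in row j + 1 or j + 2; conversely 3a + 1 = 2b, 3a + 2 = b + c, 3a + 3 = 2c build
   every admissible offset, so H_{3,k} = <a, b, c>.  For j >= 3k + 1 every r < a is
   admissible, whence the conductor bound.  In the increasing enumeration, a row j >= 1
   runs through consecutive offsets except for one jump from 3 floor(j/3) to 3k + 1,
   which is 1 mod 3, and ends at an offset that is 2 mod 3; so g_(n+1) = g_n + 1 (mod 3)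
   unless 3 divides n, which is the 3-permutation property. *)

From Stdlib Require Import Arith Lia ZifyNat.

Lemma sing_interval a x : sing a x <-> interval a a x.
Proof. unfold sing, interval; lia. Qed.

Lemma sumset_sing_interval (X : nset) lo hi a :
  (forall x, X x <-> interval lo hi x) ->
  forall x, sumset X (sing a) x <-> interval (lo + a) (hi + a) x.
Proof.
  intros HX x; unfold sumset, sing; split.
  - intros (y & z & Hy & -> & ->). apply HX in Hy. unfold interval in *; lia.
  - intros Hx. exists (x - a), a. rewrite HX. unfold interval in *; lia.
Qed.

Lemma set_lt_intervals (X Y : nset) lo1 hi1 lo2 hi2 :
  (forall x, X x <-> interval lo1 hi1 x) -> (forall y, Y y <-> interval lo2 hi2 y) ->
  lo1 <= hi1 -> lo2 <= hi2 -> hi1 < lo2 -> set_lt X Y.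
Proof.
  intros HX HY H1 H2 H12. split; [|split].
  - exists lo1. apply HX. unfold interval; lia.
  - exists lo2. apply HY. unfold interval; lia.
  - intros x y Hx%HX Hy%HY. unfold interval in *; lia.
Qed.

Lemma gen_mono (S1 S2 : nset) x : (forall s, S1 s -> S2 s) -> gen S1 x -> gen S2 x.
Proof. intros HS Hx. induction Hx; [apply gen0 | apply genS | apply genD]; auto. Qed.

Lemma gen_mul (S : nset) n s : gen S s -> gen S (n * s).
Proof. intros Hs. induction n as [| n IH]; [apply gen0 | apply (genD S s (n * s)); auto]. Qed.

Section Enumeration.
Variables (P : nset) (N : nat).
Hypothesis P_dec : forall x, {P x} + {~ P x}.

Fixpoint first_from (fuel y : nat) : nat :=
  match fuel with
  | 0 => y
  | S fuel => if P_dec y then y else first_from fuel (S y)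
  end.

Lemma first_from_spec fuel y : (exists z, y <= z < y + fuel /\ P z) ->
  y <= first_from fuel y /\ P (first_from fuel y) /\
  forall z, y <= z < first_from fuel y -> ~ P z.
Proof.
  revert y. induction fuel as [| fuel IH]; intros y (z & Hz & HPz); [lia |].
  simpl. destruct (P_dec y) as [Hy | Hy]; [split; [lia | split; [exact Hy | lia]] |].
  destruct (IH (S y)) as (Hle & HP & Hgap).
  { exists z. split; [| exact HPz]. destruct (Nat.eq_dec y z); [subst; contradiction | lia]. }
  split; [lia | split; [exact HP |]].
  intros z' Hz'. destruct (Nat.eq_dec z' y) as [-> | Hne]; [exact Hy | apply Hgap; lia].
Qed.

Hypothesis P_tail : forall x, N <= x -> P x.

(* Searching [N + 1] numbers from [y + 1] is enough, since [P] holds from [N] on. *)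
Definition next_elt (y : nat) : nat := first_from (S N) (S y).

Lemma next_elt_spec y :
  y < next_elt y /\ P (next_elt y) /\ forall z, y < z < next_elt y -> ~ P z.
Proof.
  unfold next_elt. destruct (first_from_spec (S N) (S y)) as (Hle & HP & Hgap).
  { exists (Nat.max (S y) N). split; [lia | apply P_tail; lia]. }
  split; [exact Hle | split; [exact HP |]]. intros z Hz. apply Hgap. lia.
Qed.

Lemma next_elt_eq y w : y < w -> P w -> (forall z, y < z < w -> ~ P z) -> next_elt y = w.
Proof.
  intros Hyw HPw Hgap. destruct (next_elt_spec y) as (Hy & HP & Hgap').
  destruct (lt_eq_lt_dec (next_elt y) w) as [[Hlt | Heq] | Hgt]; [| exact Heq |].
  - exfalso. apply (Hgap (next_elt y)); [lia | exact HP].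
  - exfalso. apply (Hgap' w); [lia | exact HPw].
Qed.

Fixpoint enum (n : nat) : nat :=
  match n with
  | 0 => 0
  | S n => next_elt (enum n)
  end.

Lemma enum_step n : enum n < enum (S n).
Proof. apply next_elt_spec. Qed.

Lemma enum_increasing i j : i < j -> enum i < enum j.
Proof.
  intros Hij. induction Hij as [| j _ IH]; [apply enum_step | pose proof (enum_step j); lia].
Qed.

Lemma enum_brackets x : exists n, enum n <= x < enum (S n).
Proof.
  induction x as [| x (n & Hn)].
  - exists 0. pose proof (enum_step 0). simpl in *. lia.
  - destruct (Nat.eq_dec (S x) (enum (S n))) as [Heq | Hne].
    + exists (S n). rewrite <- Heq. pose proof (enum_step (S n)). lia.
    + exists n. lia.
Qed.

Hypothesis P0 : P 0.

Lemma enum_enumerates : enumerates P enum.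
Proof.
  split; [exact enum_increasing |]. intros x. split.
  - intros Hx. destruct (enum_brackets x) as (n & Hn). exists n.
    destruct (Nat.eq_dec (enum n) x) as [Heq | Hne]; [exact Heq | exfalso].
    destruct (next_elt_spec (enum n)) as (_ & _ & Hgap).
    apply (Hgap x); [simpl in Hn; lia | exact Hx].
  - intros (n & <-). destruct n as [| n]; [exact P0 | apply next_elt_spec].
Qed.

End Enumeration.

Definition in_row (k j r : nat) : Prop :=
  r <= 3 * (j / 3) \/ (3 * k + 1 <= r /\ r + 1 <= 3 * k + 3 * ((j + 2) / 3)).

Lemma A_interval k i x : A_ k i x <-> interval (3 * i * a_ k) (3 * i * a_ k) x.
Proof. apply sing_interval. Qed.

Lemma D_interval k i x : D_ k i x <-> interval (3 * i * a_ k + a_ k) (3 * i * a_ k + a_ k) x.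
Proof. apply sumset_sing_interval, A_interval. Qed.

Lemma E_interval k i x :
  E_ k i x <-> interval (3 * i * a_ k + 1 + a_ k) (3 * i * a_ k + 3 * i + a_ k) x.
Proof. now apply sumset_sing_interval. Qed.

Lemma G_interval k i x :
  G_ k i x <-> interval (3 * i * a_ k + a_ k + a_ k) (3 * i * a_ k + a_ k + a_ k) x.
Proof. apply sumset_sing_interval, D_interval. Qed.

Lemma I_interval k i x :
  I_ k i x <-> interval (3 * i * a_ k + 1 + a_ k + a_ k) (3 * i * a_ k + 3 * i + a_ k + a_ k) x.
Proof. apply sumset_sing_interval, E_interval. Qed.

Lemma J_interval k i x :
  J_ k i x <-> interval (3 * i * a_ k + b_ k + a_ k) (3 * i * a_ k + c_ k + 3 * i + a_ k) x.
Proof. now apply sumset_sing_interval. Qed.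

Ltac interval_form :=
  first [ apply A_interval | apply D_interval | apply E_interval | apply G_interval
        | apply I_interval | apply J_interval | exact (fun _ => iff_refl _) ].

Ltac ordered_intervals :=
  eapply set_lt_intervals; [interval_form | interval_form | ..]; unfold a_, b_, c_; lia.

Lemma first_blocks_ordered k i : 1 <= i <= k ->
  set_lt (A_ k i) (B_ k i) /\ set_lt (B_ k i) (C_ k i) /\ set_lt (C_ k i) (D_ k i).
Proof.
  intros Hi. repeat (split; [ordered_intervals|]); ordered_intervals.
Qed.

Lemma blocks_ordered k i : 1 <= i < k ->
  set_lt (A_ k i) (B_ k i) /\ set_lt (B_ k i) (C_ k i) /\
  set_lt (C_ k i) (D_ k i) /\ set_lt (D_ k i) (E_ k i) /\
  set_lt (E_ k i) (F_ k i) /\ set_lt (F_ k i) (G_ k i) /\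
  set_lt (G_ k i) (I_ k i) /\ set_lt (I_ k i) (J_ k i) /\
  set_lt (J_ k i) (A_ k (i + 1)).
Proof.
  intros Hi. destruct (first_blocks_ordered k i) as (HAB & HBC & HCD); [lia|].
  do 3 (split; [assumption|]).
  repeat (split; [ordered_intervals|]); ordered_intervals.
Qed.

Lemma T_rows k i x : 1 <= i ->
  T_ k i x <-> exists j r, 3 * i <= j < 3 * i + 3 /\ x = j * a_ k + r /\ in_row k j r.
Proof.
  intros Hi. unfold T_.
  rewrite A_interval, D_interval, E_interval, G_interval, I_interval, J_interval.
  unfold B_, C_, F_, in_row, interval, a_, b_, c_. split.
  - intros Hx.
    destruct (lt_dec x (3 * i * (6 * k + 1) + (6 * k + 1))).
    { exists (3 * i), (x - 3 * i * (6 * k + 1)). lia. }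
    destruct (lt_dec x (3 * i * (6 * k + 1) + 2 * (6 * k + 1))).
    { exists (3 * i + 1), (x - (3 * i + 1) * (6 * k + 1)). lia. }
    exists (3 * i + 2), (x - (3 * i + 2) * (6 * k + 1)). lia.
  - intros (j & r & Hj & -> & Hr).
    assert (j = 3 * i \/ j = 3 * i + 1 \/ j = 3 * i + 2) as [-> | [-> | ->]] by lia; lia.
Qed.

Lemma H3_rows k x : H3 k x <-> exists j r, x = j * a_ k + r /\ in_row k j r.
Proof.
  unfold H3, sumset, S_. split.
  - intros [-> | [(s & t & Hs & Ht & ->) | (i & Hi & HT)]].
    + exists 0, 0. unfold in_row; lia.
    + destruct Ht as [-> | ->]; [exists 1 | exists 2]; exists (s - a_ k);
        unfold in_row, a_, b_, c_ in *; lia.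
    + apply T_rows in HT as (j & r & _ & HT); [eauto | exact Hi].
  - intros (j & r & -> & Hr).
    destruct (le_lt_dec 3 j) as [Hj | Hj].
    + right; right. exists (j / 3). split; [lia |].
      apply T_rows; [lia |]. exists j, r. split; [lia | auto].
    + unfold in_row in Hr.
      assert (j = 0 \/ j = 1 \/ j = 2) as [-> | [-> | ->]] by lia.
      * left. lia.
      * right; left. exists (a_ k + r), 0. unfold a_, b_, c_; lia.
      * right; left. exists (a_ k + r), (a_ k). unfold a_, b_, c_; lia.
Qed.

Lemma in_row_small k j r : j <= 3 * k -> in_row k j r -> r < a_ k.
Proof. unfold in_row, a_; lia. Qed.

Lemma in_row_tail k j r : 3 * k + 1 <= j -> r < a_ k -> in_row k j r.
Proof. unfold in_row, a_; lia. Qed.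

Lemma H3_row k j r : r < a_ k -> H3 k (j * a_ k + r) <-> in_row k j r.
Proof.
  intros Hr. rewrite H3_rows. split; [| eauto].
  intros (j' & r' & Hx & Hr').
  destruct (le_lt_dec j' (3 * k)) as [Hj' | Hj'].
  - pose proof (in_row_small k j' r' Hj' Hr').
    destruct (Nat.div_mod_unique (a_ k) j j' r r') as [-> ->]; [lia .. | exact Hr'].
  - apply in_row_tail; [| exact Hr].
    assert ((3 * k + 1) * a_ k <= j' * a_ k) by (apply Nat.mul_le_mono_r; lia).
    destruct (le_lt_dec (3 * k + 1) j) as [Hj | Hj]; [exact Hj |].
    assert (j * a_ k + a_ k <= (3 * k + 1) * a_ k) by nia. lia.
Qed.

Lemma H3_divmod k x : H3 k x <-> in_row k (x / a_ k) (x mod a_ k).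
Proof.
  rewrite (Nat.div_mod_eq x (a_ k)) at 1. rewrite Nat.mul_comm.
  apply H3_row, Nat.mod_upper_bound. unfold a_; lia.
Qed.

Lemma H3_tail k x : (3 * k + 1) * a_ k <= x -> H3 k x.
Proof.
  intros Hx. apply H3_divmod, in_row_tail.
  - apply Nat.div_le_lower_bound; [unfold a_; lia | lia].
  - apply Nat.mod_upper_bound. unfold a_; lia.
Qed.

Definition in_row_dec k j r : {in_row k j r} + {~ in_row k j r}.
Proof.
  unfold in_row.
  destruct (le_dec r (3 * (j / 3))); [left; lia |].
  destruct (le_dec (3 * k + 1) r); [| right; lia].
  destruct (le_dec (r + 1) (3 * k + 3 * ((j + 2) / 3))); [left | right]; lia.
Defined.

Definition H3_dec k x : {H3 k x} + {~ H3 k x}.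
Proof.
  destruct (in_row_dec k (x / a_ k) (x mod a_ k)) as [H | H]; [left | right];
    rewrite H3_divmod; exact H.
Defined.

Lemma gen_a k : gen (S_ k) (a_ k). Proof. apply genS. now left. Qed.
Lemma gen_b k : gen (S_ k) (b_ k). Proof. apply genS. now right; left. Qed.
Lemma gen_c k : gen (S_ k) (c_ k). Proof. apply genS. now right; right. Qed.

Lemma gen_low_offsets k i e : e <= 3 * i -> gen (S_ k) (3 * i * a_ k + e).
Proof.
  revert e. induction i as [| i IH]; intros e He.
  - replace (3 * 0 * a_ k + e) with 0 by lia. apply gen0.
  - destruct (le_lt_dec e (3 * i)) as [Hle | Hgt].
    + replace (3 * S i * a_ k + e) with ((3 * i * a_ k + e) + 3 * a_ k) by lia.
      apply genD; [apply IH, Hle | apply gen_mul, gen_a].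
    + replace (3 * S i * a_ k + e) with ((3 * i * a_ k + 3 * i) + (3 * a_ k + (e - 3 * i)))
        by lia.
      apply genD; [apply IH; lia |].
      assert (e - 3 * i = 1 \/ e - 3 * i = 2 \/ e - 3 * i = 3) as [-> | [-> | ->]] by lia.
      * replace (3 * a_ k + 1) with (b_ k + b_ k) by (unfold a_, b_; lia).
        apply genD; apply gen_b.
      * replace (3 * a_ k + 2) with (b_ k + c_ k) by (unfold a_, b_, c_; lia).
        apply genD; [apply gen_b | apply gen_c].
      * replace (3 * a_ k + 3) with (c_ k + c_ k) by (unfold a_, c_; lia).
        apply genD; apply gen_c.
Qed.

Lemma gen_low_row k j r : r <= 3 * (j / 3) -> gen (S_ k) (j * a_ k + r).
Proof.
  intros Hr.
  replace (j * a_ k + r) with ((3 * (j / 3) * a_ k + r) + (j mod 3) * a_ k)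
    by (rewrite (Nat.div_mod_eq j 3) at 1; lia).
  apply genD; [apply gen_low_offsets, Hr | apply gen_mul, gen_a].
Qed.

Lemma gen_row k j r : in_row k j r -> gen (S_ k) (j * a_ k + r).
Proof.
  intros [Hr | [Hlo Hhi]]; [apply gen_low_row, Hr |].
  destruct j as [| j]; [lia |].
  destruct (le_lt_dec (r - 3 * k - 1) (3 * (j / 3))).
  - replace (S j * a_ k + r) with (b_ k + (j * a_ k + (r - 3 * k - 1))) by (unfold a_, b_; lia).
    apply genD; [apply gen_b | apply gen_low_row; lia].
  - replace (S j * a_ k + r) with (c_ k + (j * a_ k + (r - 3 * k - 2))) by (unfold a_, c_; lia).
    apply genD; [apply gen_c | apply gen_low_row; lia].
Qed.

Lemma H3_gen k x : H3 k x -> gen (S_ k) x.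
Proof. intros (j & r & -> & Hr)%H3_rows. apply gen_row, Hr. Qed.

Lemma H3_add_generator k s x : S_ k s -> H3 k x -> H3 k (s + x).
Proof.
  rewrite !H3_rows. intros Hs (j & r & -> & [Hr | Hr]);
    destruct Hs as [-> | [-> | ->]]; unfold in_row.
  - exists (j + 1), r. lia.
  - exists (j + 1), (r + 3 * k + 1). unfold a_, b_; lia.
  - exists (j + 1), (r + 3 * k + 2). unfold a_, c_; lia.
  - exists (j + 1), r. lia.
  - exists (j + 2), (r - 3 * k). unfold a_, b_; lia.
  - exists (j + 2), (r - 3 * k + 1). unfold a_, c_; lia.
Qed.

Lemma gen_H3 k x : gen (S_ k) x -> H3 k x.
Proof.
  intros Hx. rewrite <- (Nat.add_0_r x).
  enough (Hadd : forall y, H3 k y -> H3 k (x + y)) by (apply Hadd; now left).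
  induction Hx as [| s Hs | x1 x2 _ IH1 _ IH2]; intros y Hy.
  - exact Hy.
  - apply H3_add_generator; assumption.
  - rewrite <- Nat.add_assoc. auto.
Qed.

Section H3_enumeration.
Variable k : nat.
Hypothesis hk : 1 <= k.

Local Notation tail := ((3 * k + 1) * a_ k).
Local Notation next := (next_elt (H3 k) tail (H3_dec k)).
Local Notation g := (enum (H3 k) tail (H3_dec k)).

Lemma next_within_row j r s : r < s < a_ k -> in_row k j s ->
  (forall r', r < r' < s -> ~ in_row k j r') -> next (j * a_ k + r) = j * a_ k + s.
Proof.
  intros Hs Hrow Hgap.
  apply (next_elt_eq _ _ _ (H3_tail k)); [lia | apply H3_row; [lia | exact Hrow] |].
  intros z Hz. replace z with (j * a_ k + (z - j * a_ k)) by lia.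
  rewrite H3_row by lia. apply Hgap. lia.
Qed.

Lemma next_end_of_row j r : r < a_ k -> (forall r', r < r' < a_ k -> ~ in_row k j r') ->
  next (j * a_ k + r) = (j + 1) * a_ k.
Proof.
  intros Hr Hgap. apply (next_elt_eq _ _ _ (H3_tail k)); [lia | |].
  - rewrite <- (Nat.add_0_r ((j + 1) * a_ k)). apply H3_row; unfold in_row, a_; lia.
  - intros z Hz. replace z with (j * a_ k + (z - j * a_ k)) by lia.
    rewrite H3_row by lia. apply Hgap. lia.
Qed.

Lemma next_in_row j r : 1 <= j <= 3 * k -> in_row k j r ->
  (in_row k j (r + 1) /\ next (j * a_ k + r) = j * a_ k + (r + 1)) \/
  (r = 3 * (j / 3) /\ next (j * a_ k + r) = j * a_ k + (3 * k + 1)) \/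
  (r + 1 = 3 * k + 3 * ((j + 2) / 3) /\ next (j * a_ k + r) = (j + 1) * a_ k).
Proof.
  intros Hj Hr. pose proof (in_row_small k j r ltac:(lia) Hr) as Hra.
  destruct (in_row_dec k j (r + 1)) as [Hr1 | Hr1].
  - left. split; [exact Hr1 |]. apply next_within_row; [| exact Hr1 | lia].
    pose proof (in_row_small k j (r + 1) ltac:(lia) Hr1). lia.
  - unfold in_row in Hr, Hr1. destruct Hr as [Hlow | Hhigh]; [right; left | right; right].
    + split; [lia |]. apply next_within_row; unfold in_row, a_ in *; lia.
    + split; [lia |]. apply next_end_of_row; unfold in_row, a_ in *; lia.
Qed.

Lemma enum_1 : g 1 = a_ k.
Proof.
  apply (next_elt_eq _ _ _ (H3_tail k)); [unfold a_; lia | |].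
  - rewrite <- (Nat.add_0_r (a_ k)), <- (Nat.mul_1_l (a_ k)) at 1.
    apply H3_row; unfold in_row, a_; lia.
  - intros z Hz. replace z with (0 * a_ k + z) by lia. rewrite H3_row by lia.
    unfold in_row. lia.
Qed.

Lemma enum_2 : g 2 = b_ k.
Proof.
  change (g 2) with (next (g 1)). rewrite enum_1.
  pose proof (next_in_row 1 0) as Hnext. rewrite Nat.mul_1_l, Nat.add_0_r in Hnext.
  destruct Hnext as [[H ->] | [[H ->] | [H ->]]]; unfold in_row, a_, b_ in *; lia.
Qed.

Lemma enum_3 : g 3 = c_ k.
Proof.
  change (g 3) with (next (g 2)).
  rewrite enum_2. replace (b_ k) with (1 * a_ k + (3 * k + 1)) by (unfold a_, b_; lia).
  destruct (next_in_row 1 (3 * k + 1)) as [[H ->] | [[H ->] | [H ->]]];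
    unfold in_row, a_, c_ in *; lia.
Qed.

(* Row 0 is {0} and every later row has a length divisible by 3, so the element
   j a + r (j >= 1) has an index n = r + 1 (mod 3). *)
Definition row_position (n : nat) : Prop :=
  tail <= g n \/
  exists j r, g n = j * a_ k + r /\ 1 <= j <= 3 * k /\ in_row k j r /\
              n mod 3 = (r + 1) mod 3.

Lemma row_position_step n : row_position n ->
  row_position (S n) /\ (n mod 3 <> 0 -> g (S n) mod 3 = (g n + 1) mod 3).
Proof.
  unfold row_position. change (g (S n)) with (next (g n)).
  intros [Htail | (j & r & Hg & Hj & Hr & Hn)].
  - assert (Hnext : next (g n) = g n + 1).
    { apply (next_elt_eq _ _ _ (H3_tail k)); [lia | apply H3_tail; lia | lia]. }
    rewrite Hnext. split; [left; lia | auto].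
  - rewrite Hg. destruct (next_in_row j r Hj Hr) as [[Hr1 ->] | [[Hjump ->] | [Hend ->]]].
    + split; [right; exists j, (r + 1); unfold in_row in * | intros _]; lia.
    + split; [right; exists j, (3 * k + 1); unfold in_row in * | intros _]; lia.
    + split; [| lia].
      destruct (le_lt_dec (j + 1) (3 * k)) as [Hj1 | Hj1].
      * right. exists (j + 1), 0. unfold in_row. lia.
      * left. assert (j = 3 * k) as -> by lia. lia.
Qed.

Lemma enum_residue_step n : 1 <= n -> n mod 3 <> 0 -> g (S n) mod 3 = (g n + 1) mod 3.
Proof.
  intros Hn. apply row_position_step.
  induction Hn as [| n Hn IH].
  - right. exists 1, 0. rewrite enum_1. unfold in_row. lia.
  - apply row_position_step, IH.
Qed.

Lemma H3_enum_generators x :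
  gen (fun s => exists j, 1 <= j <= 3 /\ s = g j) x <-> gen (S_ k) x.
Proof.
  split; apply gen_mono.
  - intros s (j & Hj & ->).
    assert (j = 1 \/ j = 2 \/ j = 3) as [-> | [-> | ->]] by lia;
      [rewrite enum_1 | rewrite enum_2 | rewrite enum_3]; unfold S_; auto.
  - intros s [-> | [-> | ->]]; [exists 1 | exists 2 | exists 3];
      [rewrite enum_1 | rewrite enum_2 | rewrite enum_3]; auto.
Qed.

Lemma H3_enum_blocks m r : r < 3 ->
  exists j, (1 <= j <= 3 /\ g (m * 3 + j) mod 3 = r) /\
    forall j', 1 <= j' <= 3 -> g (m * 3 + j') mod 3 = r -> j' = j.
Proof.
  intros Hr.
  pose proof (enum_residue_step (m * 3 + 1) ltac:(lia) ltac:(lia)) as H12.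
  pose proof (enum_residue_step (m * 3 + 2) ltac:(lia) ltac:(lia)) as H23.
  replace (S (m * 3 + 1)) with (m * 3 + 2) in H12 by lia.
  replace (S (m * 3 + 2)) with (m * 3 + 3) in H23 by lia.
  destruct (Nat.eq_dec (g (m * 3 + 1) mod 3) r); [exists 1 |].
  2: destruct (Nat.eq_dec (g (m * 3 + 2) mod 3) r); [exists 2 | exists 3].
  all: split; [lia |]; intros j' Hj';
    assert (j' = 1 \/ j' = 2 \/ j' = 3) as [-> | [-> | ->]] by lia; lia.
Qed.

End H3_enumeration.

Lemma H3_submonoid k : submonoid (H3 k).
Proof.
  split; [now left |]. intros x y Hx Hy.
  apply gen_H3, genD; apply H3_gen; assumption.
Qed.

Lemma H3_perm_numerical_semigroup k : 1 <= k -> perm_numerical_semigroup 3 (H3 k).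
Proof.
  intros hk. split; [split; [apply H3_submonoid |] |].
  - exists ((3 * k + 1) * a_ k). intros x Hx.
    destruct (le_lt_dec ((3 * k + 1) * a_ k) x) as [Htail | Hlt]; [| exact Hlt].
    exfalso. apply Hx, H3_tail, Htail.
  - exists (enum (H3 k) ((3 * k + 1) * a_ k) (H3_dec k)). split; [| split].
    + apply enum_enumerates; [apply H3_tail | now left].
    + intros x. rewrite H3_enum_generators by exact hk.
      split; [apply H3_gen | apply gen_H3].
    + apply H3_enum_blocks, hk.
Qed.

Theorem lemma4p3 (k : nat) (hk : 1 <= k) :
  (* (1) *)
  (submonoid (H3 k) /\ (forall x, S_ k x -> H3 k x)) /\
  (* (2) *)
  (forall i, 1 <= i <= k - 1 ->
     set_lt (A_ k i) (B_ k i) /\ set_lt (B_ k i) (C_ k i) /\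
     set_lt (C_ k i) (D_ k i) /\ set_lt (D_ k i) (E_ k i) /\
     set_lt (E_ k i) (F_ k i) /\ set_lt (F_ k i) (G_ k i) /\
     set_lt (G_ k i) (I_ k i) /\ set_lt (I_ k i) (J_ k i) /\
     set_lt (J_ k i) (A_ k (i + 1))) /\
  (set_lt (A_ k k) (B_ k k) /\ set_lt (B_ k k) (C_ k k) /\ set_lt (C_ k k) (D_ k k)) /\
  (* (3) *)
  (forall x, (3 * k + 1) * a_ k <= x -> H3 k x) /\
  (* (4) *)
  (forall x, gen (S_ k) x <-> H3 k x) /\
  (* (5) *)
  perm_numerical_semigroup 3 (H3 k).
Proof.
  split; [split; [apply H3_submonoid | intros x Hx; apply gen_H3, genS, Hx] |].
  split; [intros i Hi; apply blocks_ordered; lia |].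
  split; [apply first_blocks_ordered; lia |].
  split; [apply H3_tail |].
  split; [intros x; split; [apply gen_H3 | apply H3_gen] |].
  apply H3_perm_numerical_semigroup, hk.
Qed.
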